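(* Let $(\mathfrak g,[\cdot,\cdot],\alpha,\varepsilon)$ be a color Hom-Lie algebra and $\rho$ a representation of $\mathfrak g$ on $(M,\beta)$. Let $M^*$ be the (graded) dual of $M$, $\tilde\beta:M^*\to M^*$, $\tilde\beta(f)=f\circ\beta$, and $\tilde\rho:\mathfrak g\to\mathrm{End}(M^* )$, $\tilde\rho(x)(f)=-\varepsilon(x,f)\,f\circ\rho(x)$ for homogeneous $x,f$. Then $\tilde\rho$ is a representation of $\mathfrak g$ on $(M^*,\tilde\beta)$ if and only if $\rho(x)\circ\rho(\alpha(y))-\varepsilon(x,y)\rho(y)\circ\rho(\alpha(x))=\beta\circ\rho([x,y])$ for all homogeneous $x,y\in\mathfrak g$.
   Context: $\mathbb K$ is a field of characteristic zero and $\Gamma$ an abelian group. A bicharacter is a map $\varepsilon:\Gamma\times\Gamma\to\mathbb K\setminus\{0\}$ with $\varepsilon(a,b)\varepsilon(b,a)=1$, $\varepsilon(a,b+c)=\varepsilon(a,b)\varepsilon(a,c)$, $\varepsilon(a+b,c)=\varepsilon(a,c)\varepsilon(b,c)$; for homogeneous elements $\varepsilon(x,y)=\varepsilon(\deg x,\deg y)$. A color Hom-Lie algebra $(\mathfrak g,[\cdot,\cdot],\alpha,\varepsilon)$: $\Gamma$-graded space, even bilinear bracket, even linear $\alpha$, with $[x,y]=-\varepsilon(x,y)[y,x]$ and $\varepsilon(z,x)[\alpha(x),[y,z]]+\varepsilon(x,y)[\alpha(y),[z,x]]+\varepsilon(y,z)[\alpha(z),[x,y]]=0$. For a $\Gamma$-graded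 space $M$ and even linear $\beta:M\to M$, a representation of $\mathfrak g$ on $(M,\beta)$ is an even linear map $\rho:\mathfrak g\to\mathfrak{gl}(M)$ with $\rho([x,y])\circ\beta=\rho(\alpha(x))\circ\rho(y)-\varepsilon(x,y)\rho(\alpha(y))\circ\rho(x)$ for homogeneous $x,y$. The graded dual $M^*$ has as degree-$\gamma$ elements the linear forms $f$ with $f(M_\delta)=0$ unless $\gamma+\delta=0$. *)

From HB Require Import structures.
From mathcomp Require Import all_boot all_order all_algebra.
Set Implicit Arguments. Unset Strict Implicit. Unset Printing Implicit Defensive.
Import Order.TTheory GRing.Theory Num.Theory.
Local Open Scope ring_scope.

Definition bicharacter (K : fieldType) (G : zmodType) (eps : G -> G -> K) : Prop :=
  [/\ forall a b, eps a b != 0,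
      forall a b, eps a b * eps b a = 1,
      forall a b c, eps a (b + c) = eps a b * eps a c
    & forall a b c, eps (a + b) c = eps a c * eps b c].

Definition graded (K : fieldType) (G : zmodType) (V : lmodType K)
    (D : G -> pred V) : Prop :=
  [/\ forall g, 0 \in D g,
      forall g (k : K) u v, u \in D g -> v \in D g -> k *: u + v \in D g,
      forall v : V, exists (s : seq G) (c : G -> V),
          uniq s /\ (forall g, c g \in D g) /\ v = \sum_(g <- s) c g
    &
      forall (s : seq G) (c : G -> V), uniq s -> (forall g, c g \in D g) ->
          \sum_(g <- s) c g = 0 -> forall g, g \in s -> c g = 0].

Definition lin (K : fieldType) (U V : lmodType K) (f : U -> V) : Prop :=
  forall (k : K) u v, f (k *: u + v) = k *: f u + f v.

Definition linform (K : fieldType) (U : lmodType K) (f : U -> K) : Prop :=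
  forall (k : K) u v, f (k *: u + v) = k * f u + f v.

Definition even_map (K : fieldType) (G : zmodType) (U V : lmodType K)
    (DU : G -> pred U) (DV : G -> pred V) (f : U -> V) : Prop :=
  lin f /\ forall g u, u \in DU g -> f u \in DV g.

Definition color_hom_lie (K : fieldType) (G : zmodType) (g : lmodType K)
    (Dg : G -> pred g) (br : g -> g -> g) (al : g -> g) (eps : G -> G -> K) : Prop :=
  [/\ graded Dg /\ bicharacter eps,
      (forall x, lin (br x)) /\ (forall y, lin (br^~ y)) /\
        (forall a b x y, x \in Dg a -> y \in Dg b -> br x y \in Dg (a + b)),
      even_map Dg Dg al,
      (forall a b x y, x \in Dg a -> y \in Dg b -> br x y = - (eps a b *: br y x))
    &
      (forall a b c x y z, x \in Dg a -> y \in Dg b -> z \in Dg c ->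
         eps c a *: br (al x) (br y z) + eps a b *: br (al y) (br z x)
           + eps b c *: br (al z) (br x y) = 0)].

Definition is_representation (K : fieldType) (G : zmodType) (g M : lmodType K)
    (Dg : G -> pred g) (br : g -> g -> g) (al : g -> g) (eps : G -> G -> K)
    (DM : G -> pred M) (beta : M -> M) (rho : g -> M -> M) : Prop :=
  [/\ (forall (k : K) x y m, rho (k *: x + y) m = k *: rho x m + rho y m)
        /\ (forall x, lin (rho x)),
      (forall a d x m, x \in Dg a -> m \in DM d -> rho x m \in DM (a + d))
    & forall a b x y, x \in Dg a -> y \in Dg b ->
        forall m, rho (br x y) (beta m)
                  = rho (al x) (rho y m) - eps a b *: rho (al y) (rho x m)].

(* Homogeneous elements of degree c of the graded dual M^*:
   linear forms f with f(M_d) = 0 unless c + d = 0. *)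
Definition dual_hom (K : fieldType) (G : zmodType) (M : lmodType K)
    (DM : G -> pred M) (c : G) (f : M -> K) : Prop :=
  linform f /\ forall d m, m \in DM d -> c + d != 0 -> f m = 0.

Definition beta_tilde (K : fieldType) (M : lmodType K) (beta : M -> M)
    (f : M -> K) : M -> K := fun m => f (beta m).

(* rho~ (x)(f) = - eps(x, f) f o rho(x), for x of degree a and f of degree c *)
Definition rho_tilde (K : fieldType) (G : zmodType) (g M : lmodType K)
    (eps : G -> G -> K) (rho : g -> M -> M) (a c : G) (x : g) (f : M -> K)
    : M -> K := fun m => - (eps a c * f (rho x m)).

From HB Require Import structures.
From mathcomp Require Import all_boot all_order all_algebra.
From mathcomp Require Import boolp classical_sets ring.
Import GRing.Theory.

(* After unfolding, the dual identity for homogeneous x, y and a form f of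
   degree c reads eps(a,c) eps(b,c) f(D) = 0, where D is the defect of the
   identity on M.  Since a bicharacter never vanishes, it remains to see that
   every nonzero vector is detected by some homogeneous form of the graded
   dual: a nonzero homogeneous component of degree d is sent to 1 by a linear
   form obtained by Zorn's lemma, and precomposing with the projection onto
   degree d yields a form of degree -d. *)

Set Implicit Arguments.
Unset Strict Implicit.
Unset Printing Implicit Defensive.

Local Open Scope ring_scope.
Local Open Scope classical_set_scope.

Section LinearForms.
Variables (K : fieldType) (M : lmodType K) (f : M -> K).
Hypothesis lf : linform f.

Lemma linformD u v : f (u + v) = f u + f v.
Proof. by rewrite -[u]scale1r lf mul1r scale1r. Qed.

Lemma linform0 : f 0 = 0.
Proof. by apply: (addrI (f 0)); rewrite -linformD !addr0. Qed.

Lemma linformZ (k : K) u : f (k *: u) = k * f u.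
Proof. by rewrite -[k *: u]addr0 lf linform0 addr0. Qed.

Lemma linformN u : f (- u) = - f u.
Proof. by rewrite -scaleN1r linformZ mulN1r. Qed.

End LinearForms.

Section ExtendLinearForm.
Variables (K : fieldType) (M : lmodType K).

Definition linear_graph (A : set (M * K)) : Prop :=
  (forall m k k', A (m, k) -> A (m, k') -> k = k') /\
  (forall r m1 k1 m2 k2, A (m1, k1) -> A (m2, k2) -> A (r *: m1 + m2, r * k1 + k2)).

Lemma linear_graph_origin A m k : linear_graph A -> A (m, k) -> A (0, 0).
Proof.
by case=> _ Acl Amk; have := Acl (-1) _ _ _ _ Amk Amk; rewrite scaleN1r mulN1r !addNr.
Qed.

Lemma linear_graph_bigcup (F : set (set (M * K))) :
  F `<=` linear_graph -> total_on F subset -> linear_graph (\bigcup_(X in F) X).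
Proof.
move=> FG Ftot; split.
  move=> m k k' [X FX Xk] [Y FY Yk'].
  case: (Ftot _ _ FX FY) => [XY|YX].
    by case: (FG _ FY) => Yfun _; apply: Yfun Yk'; apply: XY.
  by case: (FG _ FX) => Xfun _; apply: Xfun Xk _; apply: YX.
move=> r m1 k1 m2 k2 [X FX X1] [Y FY Y2].
case: (Ftot _ _ FX FY) => [XY|YX].
  by exists Y => //; case: (FG _ FY) => _; apply=> //; apply: XY.
by exists X => //; case: (FG _ FX) => _; apply=> //; apply: YX.
Qed.

Lemma linear_graph_line w : w != 0 -> linear_graph [set (r *: w, r) | r in [set: K]].
Proof.
move=> w0; split.
  move=> _ k k' [r _ [<- <-]] [r' _ []] /eqP.
  by rewrite -subr_eq0 -scalerBl scaler_eq0 (negbTE w0) orbF subr_eq0 => /eqP ->.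
move=> s _ _ _ _ [r1 _ [<- <-]] [r2 _ [<- <-]].
by exists (s * r1 + r2) => //; rewrite scalerDl scalerA.
Qed.

Definition graph_extension (A : set (M * K)) (u : M) : set (M * K) :=
  [set p | exists a k r, A (a, k) /\ p = (a + r *: u, k)].

Lemma graph_extension_sub A u : A `<=` graph_extension A u.
Proof. by move=> [m k] Amk; exists m, k, 0; rewrite scale0r addr0. Qed.

Lemma linear_graph_extension A u : linear_graph A -> ~ (exists k, A (u, k)) ->
  linear_graph (graph_extension A u).
Proof.
move=> GA nu; have [Afun Acl] := GA; split.
  move=> _ _ _ [a [k [r [Ak [-> ->]]]]] [a' [k' [r' [Ak' [e ->]]]]].
  have [rr'|rr'] := eqVneq r r'.
    by move: e; rewrite rr' => /addIr e; apply: Afun Ak'; rewrite -e.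
  (* two different values at one point would put [u] in the domain of [A] *)
  exfalso; apply: nu; exists ((r - r')^-1 * (-1 * k + k')).
  have -> : u = (r - r')^-1 *: (-1 *: a + a') + 0.
    have -> : -1 *: a + a' = (r - r') *: u.
      by rewrite scaleN1r -(addrK (r' *: u) a') -e scalerBl -addrA addKr.
    by rewrite addr0 scalerA mulVf ?scale1r // subr_eq0.
  have Ad := Acl (-1) _ _ _ _ Ak Ak'.
  by rewrite -[X in A (_, X)]addr0; apply: Acl Ad (linear_graph_origin GA Ak).
move=> s _ _ _ _ [a [k [r [Ak [-> ->]]]]] [a' [k' [r' [Ak' [-> ->]]]]].
exists (s *: a + a'), (s * k + k'), (s * r + r'); split; first exact: Acl.
by rewrite scalerDr scalerDl scalerA addrACA.
Qed.

Lemma linform_of_total_graph A : linear_graph A -> (forall u, exists k, A (u, k)) ->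
  exists phi : M -> K, linform phi /\ forall u, A (u, phi u).
Proof.
move=> [Afun Acl] Atot; have [phi Aphi] := choice Atot.
by exists phi; split=> // k u v; apply: Afun (Aphi _) (Acl _ _ _ _ _ (Aphi u) (Aphi v)).
Qed.

Lemma exists_linform_eq1 w : w != 0 -> exists phi : M -> K, linform phi /\ phi w = 1.
Proof.
move=> w0; pose P A := linear_graph A /\ (A = set0 \/ A (w, 1)).
have [|A [[GA Aw] Amax]] := @Zorn_bigcup _ P.
  move=> F FP Ftot; split; first by apply: linear_graph_bigcup => // X /FP[].
  have [[X FX Xw]|noX] := pselect (exists2 X, F X & X (w, 1)); first by right; exists X.
  left; apply/seteqP; split=> // -[m k] [X FX Xmk]; case: (FP X FX) => _ [X0|Xw].
    by move: Xmk; rewrite X0.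
  by case: noX; exists X.
have {}Aw : A (w, 1).
  case: Aw => // A0; exfalso; apply: (Amax [set (r *: w, r) | r in [set: K]]).
    by rewrite A0; split=> // /(_ (0 *: w, 0)); apply; exists 0.
  by split; [exact: linear_graph_line | right; exists 1 => //; rewrite scale1r].
have Atot u : exists k, A (u, k).
  apply: contrapT => nu; apply: (Amax (graph_extension A u)).
    split=> [|/(_ (u, 0)) Au]; first exact: graph_extension_sub.
    apply: nu; exists 0; apply: Au.
    by exists 0, 0, 1; split; [apply: linear_graph_origin GA Aw | rewrite add0r scale1r].
  by split; [exact: linear_graph_extension | right; exact: graph_extension_sub].
have [phi [lphi Aphi]] := linform_of_total_graph GA Atot.
by exists phi; split => //; case: GA => Afun _; apply: Afun (Aphi w) Aw.
Qed.

End ExtendLinearForm.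

Lemma big_mkcond_subset (T : eqType) (V : nmodType) (s u : seq T) (c : T -> V) :
  uniq s -> uniq u -> {subset s <= u} ->
  \sum_(i <- u) (if i \in s then c i else 0) = \sum_(i <- s) c i.
Proof.
move=> us uu su; rewrite -big_mkcond -big_filter; apply: perm_big.
apply: uniq_perm; [exact: filter_uniq | exact: us |].
by move=> x; rewrite mem_filter; case xs: (x \in s); rewrite //= su.
Qed.

Section GradedComponents.
Variables (K : fieldType) (G : zmodType) (M : lmodType K) (D : G -> pred M).
Hypothesis HD : graded D.

Definition graded_decomp (m : M) (s : seq G) (c : G -> M) : Prop :=
  uniq s /\ (forall g, c g \in D g) /\ m = \sum_(g <- s) c g.

Definition decomp_coef (s : seq G) (c : G -> M) (d : G) : M :=
  if d \in s then c d else 0.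

Lemma decomp_coef_homogeneous s c d : (forall g, c g \in D g) -> decomp_coef s c d \in D d.
Proof. by case: HD => D0 _ _ _ Dc; rewrite /decomp_coef; case: ifP. Qed.

Lemma decomp_coef_unique m s c t e d :
  graded_decomp m s c -> graded_decomp m t e -> decomp_coef s c d = decomp_coef t e d.
Proof.
move=> [us [Dc ->]] [ut [De me]]; case: HD => _ Dcl _ Ddir.
pose u := undup (s ++ t); pose h g := decomp_coef s c g - decomp_coef t e g.
have su : {subset s <= u} by move=> x xs; rewrite mem_undup mem_cat xs.
have tu : {subset t <= u} by move=> x xt; rewrite mem_undup mem_cat xt orbT.
have [du|du] := boolP (d \in u); last first.
  by move: du; rewrite mem_undup mem_cat negb_or /decomp_coef => /andP[/negbTE -> /negbTE ->].
apply/eqP; rewrite -subr_eq0; apply/eqP; apply: (Ddir u h (undup_uniq _)) => //.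
  by move=> g; rewrite /h addrC -scaleN1r; apply: Dcl; apply: decomp_coef_homogeneous.
by rewrite /h big_split /= sumrN !big_mkcond_subset ?undup_uniq // me subrr.
Qed.

Lemma graded_decompD k u v s c t e :
  graded_decomp u s c -> graded_decomp v t e ->
  graded_decomp (k *: u + v) (undup (s ++ t))
    (fun g => k *: decomp_coef s c g + decomp_coef t e g).
Proof.
move=> [us [Dc ->]] [ut [De ->]]; case: HD => _ Dcl _ _.
have su : {subset s <= undup (s ++ t)} by move=> x xs; rewrite mem_undup mem_cat xs.
have tu : {subset t <= undup (s ++ t)} by move=> x xt; rewrite mem_undup mem_cat xt orbT.
split; first exact: undup_uniq.
split; first by move=> g; apply: Dcl; apply: decomp_coef_homogeneous.
by rewrite big_split /= -scaler_sumr !big_mkcond_subset ?undup_uniq.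
Qed.

Lemma decomp_coefD k s c t e d :
  decomp_coef (undup (s ++ t)) (fun g => k *: decomp_coef s c g + decomp_coef t e g) d
  = k *: decomp_coef s c d + decomp_coef t e d.
Proof.
rewrite {1}/decomp_coef mem_undup mem_cat; case: ifP => // /negbT.
by rewrite negb_or /decomp_coef => /andP[/negbTE -> /negbTE ->]; rewrite scaler0 addr0.
Qed.

Lemma graded_projection d : exists pi : M -> M, lin pi /\
  forall m s c, graded_decomp m s c -> pi m = decomp_coef s c d.
Proof.
have decomp_ex m : exists p : seq G * (G -> M), graded_decomp m p.1 p.2.
  by case: HD => _ _ Dex _; have [s [c]] := Dex m; exists (s, c).
have [Dec HDec] := choice decomp_ex.
pose pi m := decomp_coef (Dec m).1 (Dec m).2 d.
have pi_coef m s c : graded_decomp m s c -> pi m = decomp_coef s c d.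
  exact: decomp_coef_unique (HDec m).
exists pi; split=> // k u v.
by rewrite (pi_coef _ _ _ (graded_decompD k (HDec u) (HDec v))) decomp_coefD.
Qed.

Lemma graded_dual_separates v : v != 0 ->
  exists c (f : M -> K), dual_hom D c f /\ f v = 1.
Proof.
move=> v0; have [s [c dec_v]] : exists s c, graded_decomp v s c.
  by case: HD => _ _ /(_ v).
have [d ds cd] : exists2 d, d \in s & c d != 0.
  apply: contrapT => nocd; move: v0; case: (dec_v) => _ [_ ->].
  rewrite big_seq big1 ?eqxx // => g gs; apply/eqP; apply: contraT => cg.
  by exfalso; apply: nocd; exists g.
have [pi [lpi pi_coef]] := graded_projection d.
have [phi [lphi phi1]] := exists_linform_eq1 cd.
exists (- d), (phi \o pi); split; last by rewrite /= (pi_coef _ _ _ dec_v) /decomp_coef ds.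
split=> [k u w|e m me de]; first by rewrite /= lpi lphi.
have dec_m : graded_decomp m [:: e] (fun g => if g == e then m else 0).
  split=> //; split; last by rewrite big_seq1 eqxx.
  by case: HD => D0 _ _ _ g; case: eqP => [->|].
rewrite /= (pi_coef _ _ _ dec_m) /decomp_coef inE.
case: eqP => [ed|_]; last exact: linform0.
by move: de; rewrite ed addNr eqxx.
Qed.

End GradedComponents.

Section DualRepresentation.
Variables (K : fieldType) (G : zmodType) (g M : lmodType K).
Variables (br : g -> g -> g) (al : g -> g) (eps : G -> G -> K).
Variables (beta : M -> M) (rho : g -> M -> M).
Hypothesis Heps : bicharacter eps.

Definition rep_defect (a b : G) (x y : g) (m : M) : M :=
  rho x (rho (al y) m) - eps a b *: rho y (rho (al x) m) - beta (rho (br x y) m).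

Lemma bicharacter_inv a b : eps b a = (eps a b)^-1.
Proof.
by case: Heps => eps_neq0 epsV _ _; rewrite -[eps b a](mulKf (eps_neq0 a b)) epsV mulr1.
Qed.

Lemma rho_tilde_rep_defect a b c x y f m : linform f ->
  rho_tilde eps rho (a + b) c (br x y) (beta_tilde beta f) m
  - (rho_tilde eps rho a (b + c) (al x) (rho_tilde eps rho b c y f) m
     - eps a b * rho_tilde eps rho b (a + c) (al y) (rho_tilde eps rho a c x f) m)
  = eps a c * eps b c * f (rep_defect a b x y m).
Proof.
case: Heps => eps_neq0 _ epsDr epsDl lf.
rewrite /rho_tilde /beta_tilde /rep_defect epsDl epsDr [eps b (a + c)]epsDr.
rewrite !(linformD lf, linformN lf, linformZ lf) [eps b a]bicharacter_inv.
by field; apply: eps_neq0.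
Qed.

End DualRepresentation.

Theorem mainTheorem7 (K : fieldType) (G : zmodType) (g M : lmodType K)
    (Dg : G -> pred g) (br : g -> g -> g) (al : g -> g) (eps : G -> G -> K)
    (DM : G -> pred M) (beta : M -> M) (rho : g -> M -> M)
    (charK0 : [pchar K] =i pred0)
    (Hg : color_hom_lie Dg br al eps)
    (HM : graded DM) (Hbeta : even_map DM DM beta)
    (Hrho : is_representation Dg br al eps DM beta rho) :
  (forall a b c x y f, x \in Dg a -> y \in Dg b -> dual_hom DM c f ->
     forall m : M,
       rho_tilde eps rho (a + b) c (br x y) (beta_tilde beta f) m
       = rho_tilde eps rho a (b + c) (al x) (rho_tilde eps rho b c y f) m
         - eps a b * rho_tilde eps rho b (a + c) (al y) (rho_tilde eps rho a c x f) m)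
  <->
  (forall a b x y, x \in Dg a -> y \in Dg b ->
     forall m : M,
       rho x (rho (al y) m) - eps a b *: rho y (rho (al x) m) = beta (rho (br x y) m)).
Proof.
case: Hg => [[_ Heps] _ _ _ _]; have [eps_neq0 _ _ _] := Heps.
split=> [dual_rep a b x y xa yb m | defect0 a b c x y f xa yb [lf _] m].
- suff : rep_defect br al eps beta rho a b x y m = 0 by move/eqP; rewrite subr_eq0 => /eqP.
  apply/eqP; apply: contraT => defect_neq0.
  have [c [f [[lf fc] f1]]] := graded_dual_separates HM defect_neq0.
  have := rho_tilde_rep_defect br al beta rho Heps a b c x y m lf.
  rewrite (dual_rep a b c x y f xa yb (conj lf fc)) subrr f1 mulr1 => /esym/eqP.
  by rewrite mulf_eq0 !(negbTE (eps_neq0 _ _)).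
- apply/eqP; rewrite -subr_eq0 (rho_tilde_rep_defect _ _ _ _ Heps _ _ _ _ _ _ lf).
  by rewrite /rep_defect defect0 // subrr (linform0 lf) mulr0.
Qed.
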